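(* Let $(X,d_X)$ be a metric space and $C\in(0,\infty)$. Then $\Delta_X^{(c)}(R)\leq CR$ for all $R\in[0,\infty)$ if and only if $\Delta_X^{(u)}(r)\geq\frac1C r$ for all $r>0$.
   Context: For a cover $\mathcal{U}$ of $X$: $\mathrm{diam}(\mathcal{U})=\sup_{U\in\mathcal{U}}\mathrm{diam}(U)$; $\mathcal{L}(\mathcal{U})=\sup\{d\in[0,\infty): \text{every } E\subseteq X \text{ with } \mathrm{diam}(E)<d \text{ is contained in some } U\in\mathcal{U}\}$; point-finite means each point lies in only finitely many members. $\Delta_X^{(u)}(r)=\sup\{\mathcal{L}(\mathcal{U}): \mathcal{U} \text{ point-finite cover of } X,\ \mathrm{diam}(\mathcal{U})\leq r\}$, $\Delta_X^{(c)}(R)=\inf\{\mathrm{diam}(\mathcal{U}): \mathcal{U} \text{ point-finite cover of } X,\ \mathcal{L}(\mathcal{U})\geq R\}$. *)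

From mathcomp Require Import all_boot all_order all_algebra.
From mathcomp Require Import all_classical all_reals all_analysis.
Set Implicit Arguments. Unset Strict Implicit. Unset Printing Implicit Defensive.
Import Order.TTheory GRing.Theory Num.Theory.
Local Open Scope classical_set_scope.
Local Open Scope ring_scope.
Local Open Scope ereal_scope.

Section Covers.
Variables (R : realType) (X : Type) (d : X -> X -> R).

Definition is_metric : Prop :=
  [/\ (forall x y, (0 <= d x y)%R),
      (forall x y, d x y = 0%R <-> x = y),
      (forall x y, d x y = d y x) &
      (forall x y z, (d x z <= d x y + d y z)%R)].

(* diameter of a subset (convention: diam set0 = 0) *)
Definition diam (E : set X) : \bar R :=
  ereal_sup (0 |` [set (d x y)%:E | x in E & y in E]).

Definition is_cover (U : set (set X)) : Prop :=
  forall x, exists2 V, U V & V x.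

Definition point_finite (U : set (set X)) : Prop :=
  forall x, finite_set [set V | U V /\ V x].

(* diam(U) = sup of diameters of members (convention: sup over empty = 0) *)
Definition diam_cover (U : set (set X)) : \bar R :=
  ereal_sup (0 |` [set diam V | V in U]).

Definition lebesgue_number (U : set (set X)) : \bar R :=
  ereal_sup [set t%:E | t in [set t : R | (0 <= t)%R /\
     (forall E : set X, diam E < t%:E -> exists2 V, U V & E `<=` V)]].

Definition Delta_u (r : R) : \bar R :=
  ereal_sup [set lebesgue_number U | U in
     [set U | is_cover U /\ point_finite U /\ diam_cover U <= r%:E]].

Definition Delta_c (Rr : R) : \bar R :=
  ereal_inf [set diam_cover U | U in
     [set U | is_cover U /\ point_finite U /\ Rr%:E <= lebesgue_number U]].

End Covers.

From mathcomp Require Import all_boot all_order all_algebra.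
From mathcomp Require Import all_classical all_reals all_analysis.
Import Order.TTheory GRing.Theory Num.Theory.
Local Open Scope classical_set_scope.
Local Open Scope ring_scope.

(* Both quantities are extremal values over the same class of point-finite
   covers, so one cover witnesses both bounds: Delta_c R < r forces
   R <= Delta_u r, and R < Delta_u r forces Delta_c R <= r.  Scaling by C
   and letting the strict inequalities tend to equalities turns a linear
   upper bound on Delta_c into a linear lower bound on Delta_u and back. *)

Section CoverDuality.
Variables (R : realType) (X : Type) (d : X -> X -> R).

Lemma Delta_u_ge_of_Delta_c_lt (Rr r : R) :
  (Delta_c d Rr < r%:E)%E -> (Rr%:E <= Delta_u d r)%E.
Proof.
case/ereal_inf_lt => _ [U [coverU [finU leb_ge]] <-] diam_lt.
apply: (le_trans leb_ge); apply: ereal_sup_ubound.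
by exists U => //; split => //; split => //; exact: ltW.
Qed.

Lemma Delta_c_le_of_Delta_u_gt (Rr r : R) :
  (Rr%:E < Delta_u d r)%E -> (Delta_c d Rr <= r%:E)%E.
Proof.
case/ereal_sup_gt => _ [U [coverU [finU diam_le]] <-] leb_gt.
apply: (le_trans _ diam_le); apply: ereal_inf_lbound.
by exists U => //; split => //; split => //; exact: ltW.
Qed.

Variables (C : R) (hC : 0 < C).

Lemma Delta_u_linear_lower_bound :
  (forall Rr : R, 0 <= Rr -> (Delta_c d Rr <= (C * Rr)%:E)%E) ->
  forall r : R, 0 < r -> ((r / C)%:E <= Delta_u d r)%E.
Proof.
move=> Delta_c_le r r_gt0.
have rC_ge0 : 0 <= r / C by rewrite divr_ge0 // ltW.
apply/lee_mul01Pr; first by rewrite lee_fin.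
move=> t /andP[t_gt0 t_lt1]; rewrite -EFinM.
apply: Delta_u_ge_of_Delta_c_lt.
apply: (le_lt_trans (Delta_c_le _ (mulr_ge0 (ltW t_gt0) rC_ge0))).
by rewrite lte_fin mulrCA (mulrCA C) divff ?gt_eqF // mulr1 gtr_pMl.
Qed.

Lemma Delta_c_linear_upper_bound :
  (forall r : R, 0 < r -> ((r / C)%:E <= Delta_u d r)%E) ->
  forall Rr : R, 0 <= Rr -> (Delta_c d Rr <= (C * Rr)%:E)%E.
Proof.
move=> Delta_u_ge Rr Rr_ge0.
apply/lee_addgt0Pr => e e_gt0; rewrite -EFinD.
apply: Delta_c_le_of_Delta_u_gt.
have r_gt0 : 0 < C * Rr + e by rewrite ltr_wpDl // mulr_ge0 // ltW.
apply: (lt_le_trans _ (Delta_u_ge _ r_gt0)).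
by rewrite lte_fin ltr_pdivlMr // mulrC ltrDl.
Qed.

End CoverDuality.

Theorem lemma3p6 (R : realType) (X : Type) (d : X -> X -> R)
  (hd : is_metric d) (C : R) (hC : 0 < C) :
  (forall Rr : R, 0 <= Rr -> (Delta_c d Rr <= (C * Rr)%:E)%E) <->
  (forall r : R, 0 < r -> ((r / C)%:E <= Delta_u d r)%E).
Proof.
split; [exact: Delta_u_linear_lower_bound | exact: Delta_c_linear_upper_bound].
Qed.
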